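(* Let $G$ be a graph with finitely many vertices, and let $v\in G^0$ be a regular vertex which does not support a loop of length one. Define a graph $E$ as follows: - $E^0=G^0\setminus\{v\}$; - $E^1=(G^1\setminus(r^{-1}(v)\cup s^{-1}(v)))\cup\{[ef]: e\in r^{-1}(v),\ f\in s^{-1}(v)\}$; - range and source maps extend those of $G$, with $r_E([ef])=r_G(f)$ and $s_E([ef])=s_G(e)$. Then $G\sim_M E$.
   Context: A graph $G=(G^0,G^1,r,s)$ has vertex set $G^0$, edge set $G^1$, and range/source maps; multiple edges and loops are allowed. A source receives no edges, a sink emits no edges, and an infinite emitter emits infinitely many edges. A vertex is singular if it is a sink or infinite emitter, and regular otherwise. A vertex $v$ supports a loop of length one if there is an edge $e$ with $s(e)=r(e)=v$. Move-equivalence $\sim_M$ is the smallest equivalence relation on graphs with finitely many vertices such that $G\sim_M E$ whenever $E$ is isomorphic to a graph obtained from $G$ by one of the following moves. (S) Delete a regular source together with the edges it emits. (R) For a regular vertex $u$ emitting exactly one edge $f$, with $r(f)\neq u$, and all of whose incoming edges have the same source $v$: delete $u$, $f$ and the edges into $u$, and add for each $e\in r^{-1}(u)$ an edge $[ef]$ from $v$ to $r(f)$. (O) Out-splitting at a non-sink $v$ along a partition $\mathcal E_1,\dots,\mathcal E_n$ of $s^{-1}(v)$ with at most one infinite part. Replace $v$ by $v^1,\dots,v^n$. Each edge $e$ into $v$ becomes copies $e^1,\dots,e^n$ with $r(e^i)=v^i$ and source $s(e)$, or source $v^j$ if $s(e)=v$ and $e\in\mathcal E_j$. An edge from $v$ to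 $w\neq v$ lying in $\mathcal E_i$ gets source $v^i$. (I) In-splitting at a regular non-source $v$ along a partition $\mathcal E_1,\dots,\mathcal E_n$ of $r^{-1}(v)$. Replace $v$ by $v^1,\dots,v^n$. Each edge $e$ out of $v$ becomes copies $e^1,\dots,e^n$ with $s(e^i)=v^i$ and range $r(e)$, or range $v^j$ if $r(e)=v$ and $e\in\mathcal E_j$. An edge into $v$ from $w\neq v$ lying in $\mathcal E_i$ gets range $v^i$. *)

From HB Require Import structures.
From mathcomp Require Import all_boot.

Set Implicit Arguments.
Unset Strict Implicit.
Unset Printing Implicit Defensive.

Record graph := Graph {
  gV : finType;
  gE : Type;
  rg : gE -> gV;
  sg : gE -> gV
}.
Arguments rg {g} e.
Arguments sg {g} e.

Definition finite_set (T : Type) (P : T -> Prop) : Prop :=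
  exists (n : nat) (f : 'I_n -> T), forall x, P x -> exists i, f i = x.

Definition is_sink (G : graph) (v : gV G) : Prop := forall e : gE G, sg e <> v.
Definition is_source (G : graph) (v : gV G) : Prop := forall e : gE G, rg e <> v.
Definition is_inf_emitter (G : graph) (v : gV G) : Prop :=
  ~ finite_set (fun e : gE G => sg e = v).
Definition is_singular (G : graph) (v : gV G) : Prop :=
  is_sink v \/ is_inf_emitter v.
Definition is_regular (G : graph) (v : gV G) : Prop := ~ is_singular v.
Definition supports_loop (G : graph) (v : gV G) : Prop :=
  exists e : gE G, sg e = v /\ rg e = v.

Definition graph_iso (G H : graph) : Prop :=
  exists (f0 : gV G -> gV H) (f1 : gE G -> gE H),
    [/\ bijective f0, bijective f1,
        (forall e, rg (f1 e) = f0 (rg e)) & (forall e, sg (f1 e) = f0 (sg e))].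

Definition delV (G : graph) (u : gV G) : finType := {x : gV G | x != u}.

Definition untouched (G : graph) (u : gV G) : Type :=
  {e : gE G | sg e != u /\ rg e != u}.

Definition unt_r (G : graph) (u : gV G) (e : untouched u) : delV u :=
  exist (fun x => x != u) (rg (sval e)) (proj2 (svalP e)).
Definition unt_s (G : graph) (u : gV G) (e : untouched u) : delV u :=
  exist (fun x => x != u) (sg (sval e)) (proj1 (svalP e)).

(* ---------- Move (S): delete the vertex u (a source) and its emitted edges.
   Since u is a source in the move, the edges removed are exactly s^{-1}(u). *)
Definition del_graph (G : graph) (u : gV G) : graph :=
  @Graph (delV u) (untouched u) (@unt_r G u) (@unt_s G u).

Lemma reduce_src_ok (G : graph) (u : gV G) (f : gE G)
  (hf : forall e : gE G, sg e = u -> e = f) (hrf : rg f != u) :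
  forall e : gE G, rg e = u -> sg e != u.
Proof.
move=> e hre; apply/eqP=> hse; have hef := hf e hse.
by move: hrf; rewrite -hef hre eqxx.
Qed.

Definition reduce_E (G : graph) (u : gV G) : Type :=
  (untouched u + {e : gE G | rg e = u})%type.

Definition reduce_r (G : graph) (u : gV G) (f : gE G) (hrf : rg f != u)
  (e : reduce_E u) : delV u :=
  match e with
  | inl e' => unt_r e'
  | inr _ => exist (fun x => x != u) (rg f) hrf   (* r([ef]) = r(f) *)
  end.

Definition reduce_s (G : graph) (u : gV G) (f : gE G)
  (hf : forall e : gE G, sg e = u -> e = f) (hrf : rg f != u)
  (e : reduce_E u) : delV u :=
  match e with
  | inl e' => unt_s e'
  | inr e' => exist (fun x => x != u) (sg (sval e'))
                    (reduce_src_ok hf hrf (svalP e'))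
  end.

Definition reduce_graph (G : graph) (u : gV G) (f : gE G)
  (hf : forall e : gE G, sg e = u -> e = f) (hrf : rg f != u) : graph :=
  @Graph (delV u) (reduce_E u) (reduce_r hrf) (reduce_s hf hrf).

(* The partition E_1,...,E_n of s^{-1}(v)
   is given by [part : gE G -> 'I_n] (only its values on s^{-1}(v) matter);
   E_i = {e | s e = v /\ part e = i}.  New vertices: old vertices other than v,
   plus v^1..v^n (= inr i).  New edges: edges with range <> v (kept), plus
   copies e^i (= inr (e, i)) of edges e into v. *)
Definition split_V (G : graph) (v : gV G) (n : nat) : finType :=
  (delV v + 'I_n)%type.

Definition out_src (G : graph) (v : gV G) (n : nat) (part : gE G -> 'I_n)
  (e : gE G) : split_V v n :=
  match insub (sT := delV v) (sg e) with
  | Some x => inl x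
  | None => inr (part e)
  end.

Definition out_E (G : graph) (v : gV G) (n : nat) : Type :=
  ({e : gE G | rg e != v} + ({e : gE G | rg e = v} * 'I_n))%type.

Definition out_r (G : graph) (v : gV G) (n : nat) (e : out_E v n) : split_V v n :=
  match e with
  | inl e' => inl (exist (fun x => x != v) (rg (sval e')) (svalP e'))
  | inr (_, i) => inr i
  end.

Definition out_s (G : graph) (v : gV G) (n : nat) (part : gE G -> 'I_n)
  (e : out_E v n) : split_V v n :=
  match e with
  | inl e' => out_src v part (sval e')
  | inr (e', _) => out_src v part (sval e')
  end.

Definition outsplit_graph (G : graph) (v : gV G) (n : nat) (part : gE G -> 'I_n)
  : graph := @Graph (split_V v n) (out_E v n) (@out_r G v n) (out_s part).

(* ---------- Move (I): in-splitting.  Partition E_1..E_n of r^{-1}(v) given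
   by [part], E_i = {e | r e = v /\ part e = i}. *)
Definition in_tgt (G : graph) (v : gV G) (n : nat) (part : gE G -> 'I_n)
  (e : gE G) : split_V v n :=
  match insub (sT := delV v) (rg e) with
  | Some x => inl x
  | None => inr (part e)
  end.

Definition in_E (G : graph) (v : gV G) (n : nat) : Type :=
  ({e : gE G | sg e != v} + ({e : gE G | sg e = v} * 'I_n))%type.

Definition in_s (G : graph) (v : gV G) (n : nat) (e : in_E v n) : split_V v n :=
  match e with
  | inl e' => inl (exist (fun x => x != v) (sg (sval e')) (svalP e'))
  | inr (_, i) => inr i
  end.

Definition in_r (G : graph) (v : gV G) (n : nat) (part : gE G -> 'I_n)
  (e : in_E v n) : split_V v n :=
  match e with
  | inl e' => in_tgt v part (sval e')
  | inr (e', _) => in_tgt v part (sval e')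
  end.

Definition insplit_graph (G : graph) (v : gV G) (n : nat) (part : gE G -> 'I_n)
  : graph := @Graph (split_V v n) (in_E v n) (in_r part) (@in_s G v n).

Inductive move_step : graph -> graph -> Prop :=
| move_S (G H : graph) (u : gV G) :
    is_regular u -> is_source u ->
    graph_iso H (del_graph u) -> move_step G H
| move_R (G H : graph) (u : gV G) (f : gE G)
    (hsf : sg f = u)
    (hf : forall e : gE G, sg e = u -> e = f)
    (hrf : rg f != u) :
    is_regular u ->
    (exists w : gV G, forall e : gE G, rg e = u -> sg e = w) ->
    graph_iso H (reduce_graph hf hrf) -> move_step G H
| move_O (G H : graph) (v : gV G) (n : nat) (part : gE G -> 'I_n) :
    ~ is_sink v ->
    (forall i : 'I_n, exists e : gE G, sg e = v /\ part e = i) ->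
    (forall i j : 'I_n, i != j ->
        finite_set (fun e : gE G => sg e = v /\ part e = i) \/
        finite_set (fun e : gE G => sg e = v /\ part e = j)) ->
    graph_iso H (outsplit_graph v part) -> move_step G H
| move_I (G H : graph) (v : gV G) (n : nat) (part : gE G -> 'I_n) :
    is_regular v -> ~ is_source v ->
    (forall i : 'I_n, exists e : gE G, rg e = v /\ part e = i) ->
    graph_iso H (insplit_graph v part) -> move_step G H.

Inductive move_eq : graph -> graph -> Prop :=
| meq_step G H : move_step G H -> move_eq G H
| meq_refl G : move_eq G G
| meq_sym G H : move_eq G H -> move_eq H G
| meq_trans G H K : move_eq G H -> move_eq H K -> move_eq G K.

Lemma noloop_r (G : graph) (v : gV G) (hl : ~ supports_loop v) :
  forall e : gE G, sg e = v -> rg e != v.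
Proof. by move=> e hs; apply/eqP=> hr; apply: hl; exists e. Qed.

Lemma noloop_s (G : graph) (v : gV G) (hl : ~ supports_loop v) :
  forall e : gE G, rg e = v -> sg e != v.
Proof. by move=> e hr; apply/eqP=> hs; apply: hl; exists e. Qed.

(* edges: G^1 \ (r^{-1}(v) U s^{-1}(v)), plus [ef] = inr (e, f) *)
Definition collapse_E (G : graph) (v : gV G) : Type :=
  (untouched v + {p : gE G * gE G | rg p.1 = v /\ sg p.2 = v})%type.

Definition collapse_r (G : graph) (v : gV G) (hl : ~ supports_loop v)
  (e : collapse_E v) : delV v :=
  match e with
  | inl e' => unt_r e'
  | inr p => exist (fun x => x != v) (rg (sval p).2)
                   (noloop_r hl (proj2 (svalP p)))
  end.

Definition collapse_s (G : graph) (v : gV G) (hl : ~ supports_loop v)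
  (e : collapse_E v) : delV v :=
  match e with
  | inl e' => unt_s e'
  | inr p => exist (fun x => x != v) (sg (sval p).1)
                   (noloop_s hl (proj1 (svalP p)))
  end.

Definition collapse_graph (G : graph) (v : gV G) (hl : ~ supports_loop v) : graph :=
  @Graph (delV v) (collapse_E v) (collapse_r hl) (collapse_s hl).

From mathcomp Require Import all_boot zify.
From Stdlib Require Import ClassicalEpsilon ProofIrrelevance Classical.

(* Induction on the number [a] of edges emitted by [v] and the number [b] of
   distinct sources of edges entering [v].  If no edge enters [v], move (S)
   deletes it, which is the collapse.  If [v] emits two distinct edges [f1]
   and [f2], out-split [v] into [v0], emitting only [f1], and [v1], emitting
   the other edges; collapsing [v0] (which emits one edge) and then [v1]
   (which emits [a - 1] edges) yields the collapse of [G] at [v].  If [v]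
   emits a single edge and all edges entering [v] have a common source, move
   (R) is the collapse.  Otherwise in-split [v] into [v0], receiving the edges
   whose source is that of a fixed edge [e1] entering [v], and [v1], receiving
   the others; then collapse [v0] (one source) and [v1] ([b - 1] sources).
   The iterated collapses are identified with the collapse of [G] at [v]
   through embeddings of their vertices into G^0 and of their edges into
   G^1 + G^1 * G^1, whose images determine a graph up to isomorphism. *)

Set Implicit Arguments.
Unset Strict Implicit.
Unset Printing Implicit Defensive.

Lemma inj_surj_bijective (A B : Type) (f : A -> B) :
  injective f -> (forall y, exists x, f x = y) -> bijective f.
Proof.
move=> f_inj f_surj.
pose g y := proj1_sig (constructive_indefinite_description _ (f_surj y)).
have gK y : f (g y) = y by rewrite /g; case: constructive_indefinite_description.
by exists g => [x|y]; [apply: f_inj; rewrite gK | rewrite gK].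
Qed.

Lemma bijective_transport (A A' B : Type) (m : A -> B) (m' : A' -> B) :
  injective m -> injective m' ->
  (forall y, (exists x, m x = y) <-> (exists x', m' x' = y)) ->
  exists2 f : A -> A', bijective f & forall x, m' (f x) = m x.
Proof.
move=> m_inj m'_inj im.
have fx x : exists x', m' x' = m x by apply/im; exists x.
pose f x := proj1_sig (constructive_indefinite_description _ (fx x)).
have fE x : m' (f x) = m x by rewrite /f; case: constructive_indefinite_description.
exists f => //; apply: inj_surj_bijective => [x y /(congr1 m')|x'].
  by rewrite !fE => /m_inj.
have [x mx] : exists x, m x = m' x' by apply/im; exists x'.
by exists x; apply: m'_inj; rewrite fE.
Qed.

Lemma sval_inj (A : Type) (P : A -> Prop) : injective (@proj1_sig A P).
Proof. exact: eq_sig_hprop (fun x => @proof_irrelevance (P x)). Qed.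

Lemma graph_iso_refl (G : graph) : graph_iso G G.
Proof. by exists id, id; split => //; exists id. Qed.

Lemma graph_iso_sym (G H : graph) : graph_iso G H -> graph_iso H G.
Proof.
case=> f0 [f1 [[g0 f0K g0K] [g1 f1K g1K] f_rg f_sg]].
exists g0, g1; split; [by exists f0 | by exists f1 | |].
- by move=> e; apply: (can_inj f0K); rewrite -f_rg g0K g1K.
- by move=> e; apply: (can_inj f0K); rewrite -f_sg g0K g1K.
Qed.

Lemma graph_iso_trans (G H K : graph) :
  graph_iso G H -> graph_iso H K -> graph_iso G K.
Proof.
case=> f0 [f1 [f0_bij f1_bij f_rg f_sg]] [g0 [g1 [g0_bij g1_bij g_rg g_sg]]].
exists (g0 \o f0), (g1 \o f1); split; try exact: bij_comp.
- by move=> e /=; rewrite g_rg f_rg.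
- by move=> e /=; rewrite g_sg f_sg.
Qed.

Definition at_most (T : Type) (Q : T -> Prop) (n : nat) : Prop :=
  exists g : T -> nat, (forall x, Q x -> g x < n) /\
    (forall x y, Q x -> Q y -> g x = g y -> x = y).

Definition sources (G : graph) (Q : gE G -> Prop) (w : gV G) : Prop :=
  exists2 e, Q e & sg e = w.

Lemma at_most_inj (S T : Type) (Q' : S -> Prop) (Q : T -> Prop) n (d : S -> T) :
  (forall x, Q' x -> Q (d x)) ->
  (forall x y, Q' x -> Q' y -> d x = d y -> x = y) ->
  at_most Q n -> at_most Q' n.
Proof.
move=> dQ d_inj [g [g_lt g_inj]]; exists (g \o d); split => [x /dQ /g_lt //|x y Qx Qy].
by move/(g_inj _ _ (dQ _ Qx) (dQ _ Qy)); apply: d_inj.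
Qed.

Arguments at_most_inj {S T Q' Q n} d.

Lemma at_most_sub (T : Type) (Q' Q : T -> Prop) n :
  at_most Q n -> (forall x, Q' x -> Q x) -> at_most Q' n.
Proof. by move=> Qn sQ; apply: (at_most_inj id) Qn => // x y _ _. Qed.

Lemma at_most1 (T : Type) (x0 : T) : at_most (fun x => x = x0) 1.
Proof. by exists (fun=> 0); split => // x y -> ->. Qed.

Lemma at_most_remove (T : Type) (Q : T -> Prop) n x0 :
  Q x0 -> at_most Q n -> at_most (fun x => Q x /\ x <> x0) n.-1.
Proof.
move=> Qx0 [g [g_lt g_inj]].
have g_neq x : Q x -> x <> x0 -> g x <> g x0 by move=> Qx nx /(g_inj _ _ Qx Qx0).
exists (fun x => if g x < g x0 then g x else (g x).-1); split.
  move=> x [Qx /(g_neq _ Qx)]; have := g_lt _ Qx; have := g_lt _ Qx0.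
  by case: ifP; lia.
move=> x y [Qx /(g_neq _ Qx) nx] [Qy /(g_neq _ Qy) ny] gxy.
by apply: g_inj => //; move: gxy; do 2 case: ifP; lia.
Qed.

Lemma at_most_gt1 (T : Type) (Q : T -> Prop) n x y :
  Q x -> Q y -> x <> y -> at_most Q n -> 1 < n.
Proof.
move=> Qx Qy xy [g [g_lt g_inj]].
have : g x <> g y by move/(g_inj _ _ Qx Qy).
by have := g_lt _ Qx; have := g_lt _ Qy; lia.
Qed.

Lemma at_most_finite (T : Type) (Q : T -> Prop) n x0 :
  Q x0 -> at_most Q n -> finite_set Q.
Proof.
move=> Qx0 [g [g_lt g_inj]].
pose c (i : 'I_n) := epsilon (inhabits x0) (fun x => Q x /\ g x = i).
exists n, c => x Qx; exists (Ordinal (g_lt _ Qx)).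
have [Qc gc] := epsilon_spec (inhabits x0) (fun y => Q y /\ g y = g x)
  (ex_intro _ x (conj Qx erefl)).
exact: g_inj Qc Qx gc.
Qed.

Lemma finite_at_most (T : Type) (Q : T -> Prop) :
  finite_set Q -> exists n, at_most Q n.
Proof.
case=> n [c c_onto]; exists n.
pose g x := epsilon (inhabits 0) (fun k => exists2 i : 'I_n, k = i & c i = x).
have gP x : Q x -> exists2 i : 'I_n, g x = i & c i = x.
  move=> /c_onto [i ci].
  apply: (epsilon_spec (inhabits 0) (fun k => exists2 i : 'I_n, k = i & c i = x)).
  by exists i, i.
exists g; split => [x /gP [i -> _] //|x y /gP [i gx xi] /gP [j gy yj]].
by rewrite gx gy -xi -yj => /val_inj ->.
Qed.

Lemma at_most_card (T : finType) (Q : T -> Prop) : at_most Q #|T|.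
Proof.
exists (fun x => val (enum_rank x)); split => [x _|x y _ _ /val_inj /enum_rank_inj //].
exact: ltn_ord.
Qed.

Lemma at_most_regular (G : graph) (v : gV G) n e0 :
  sg e0 = v -> at_most (fun e => sg e = v) n -> is_regular v.
Proof.
move=> e0v bound [sink|]; first exact: (sink e0).
by apply; apply: at_most_finite e0v bound.
Qed.

(* [inr (e, f)] stands for the composite edge [ef]. *)
Definition cedge (G : graph) : Type := (gE G + gE G * gE G)%type.

Definition cedge_rg (G : graph) (t : cedge G) : gV G :=
  match t with inl e => rg e | inr (_, f) => rg f end.

Definition cedge_sg (G : graph) (t : cedge G) : gV G :=
  match t with inl e => sg e | inr (e, _) => sg e end.

Definition cedge_head (G : graph) (t : cedge G) : gE G :=
  match t with inl e => e | inr (e, _) => e end.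

Definition collapsed_edge (G : graph) (v : gV G) (t : cedge G) : Prop :=
  match t with
  | inl e => sg e != v /\ rg e != v
  | inr (e, f) => rg e = v /\ sg f = v
  end.

Record collapse_model (G : graph) (v : gV G) (K : graph)
    (dv : gV K -> gV G) (de : gE K -> cedge G) : Prop := {
  cm_vinj : injective dv;
  cm_vimage : forall w, w != v <-> exists x, dv x = w;
  cm_einj : injective de;
  cm_eimage : forall t, collapsed_edge v t <-> exists x, de x = t;
  cm_rg : forall x, dv (rg x) = cedge_rg (de x);
  cm_sg : forall x, dv (sg x) = cedge_sg (de x) }.
Arguments collapse_model {G} v K dv de.

Lemma collapse_models_iso (G : graph) (v : gV G) (K K' : graph)
    dv de dv' de' :
  collapse_model v K dv de -> collapse_model v K' dv' de' -> graph_iso K K'.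
Proof.
move=> M M'.
have [f0 f0_bij f0E] : exists2 f0 : gV K -> gV K', bijective f0 & forall x, dv' (f0 x) = dv x.
  apply: bijective_transport (cm_vinj M) (cm_vinj M') _ => w.
  exact: iff_trans (iff_sym (cm_vimage M w)) (cm_vimage M' w).
have [f1 f1_bij f1E] : exists2 f1 : gE K -> gE K', bijective f1 & forall x, de' (f1 x) = de x.
  apply: bijective_transport (cm_einj M) (cm_einj M') _ => t.
  exact: iff_trans (iff_sym (cm_eimage M t)) (cm_eimage M' t).
exists f0, f1; split => // x; apply: (cm_vinj M').
- by rewrite f0E (cm_rg M) (cm_rg M') f1E.
- by rewrite f0E (cm_sg M) (cm_sg M') f1E.
Qed.

Definition collapse_code (G : graph) (v : gV G) (y : collapse_E v) : cedge G :=
  match y with inl e => inl (sval e) | inr p => inr (sval p) end.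

Lemma collapse_graph_model (G : graph) (v : gV G) (hl : ~ supports_loop v) :
  collapse_model v (collapse_graph hl) sval (@collapse_code G v).
Proof.
split.
- exact: val_inj.
- move=> w; split => [w_neq|[[x x_neq] <-] //].
  by exists (exist _ w w_neq).
- by case=> [e|p] [e'|p'] //= [] /sval_inj ->.
- case=> [e|[e f]] /=; split.
  + by move=> he; exists (inl (exist _ e he)).
  + by case=> [[[e' he']|//] [<-]].
  + by move=> hef; exists (inr (exist _ (e, f) hef)).
  + by case=> [[//|[[e' f'] he']] [<- <-]].
- by case=> [[e he]|[[e f] hef]].
- by case=> [[e he]|[[e f] hef]].
Qed.

Lemma collapse_model_iso (G : graph) (v : gV G) (hl : ~ supports_loop v)
    (K : graph) dv de :
  collapse_model v K dv de -> graph_iso K (collapse_graph hl).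
Proof. by move=> M; apply: collapse_models_iso M (collapse_graph_model hl). Qed.

(* A graph in which [v] has become a vertex [u] that still receives the
   edges [e] with [A e] and emits the edges [f] with [B f]; the composites
   [ef] of all other pairs are already present. *)
Definition precollapsed_edge (G : graph) (v : gV G) (A B : pred (gE G))
    (t : cedge G) : Prop :=
  match t with
  | inl e => [\/ sg e != v /\ rg e != v, rg e = v /\ A e | sg e = v /\ B e]
  | inr (e, f) => [/\ rg e = v, sg f = v & ~~ (A e && B f)]
  end.

Record precollapse_model (G : graph) (v : gV G) (A B : pred (gE G))
    (K : graph) (u : gV K) (dv : gV K -> gV G) (de : gE K -> cedge G) : Prop := {
  pm_vinj : injective dv;
  pm_vsurj : forall w, exists x, dv x = w;
  pm_vu : dv u = v;
  pm_einj : injective de;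
  pm_eimage : forall t, precollapsed_edge v A B t <-> exists x, de x = t;
  pm_rg : forall x, dv (rg x) = cedge_rg (de x);
  pm_sg : forall x, dv (sg x) = cedge_sg (de x) }.
Arguments precollapse_model {G} v A B {K} u dv de.

Section PrecollapseModel.
Variables (G : graph) (v : gV G) (hl : ~ supports_loop v) (A B : pred (gE G)).
Variables (K : graph) (u : gV K) (dv : gV K -> gV G) (de : gE K -> cedge G).
Hypothesis M : precollapse_model v A B u dv de.

Lemma pm_dv_eq_v x : dv x = v -> x = u.
Proof. by move=> xv; apply: (pm_vinj M); rewrite xv (pm_vu M). Qed.

Lemma pm_dv_neq_v x : (dv x != v) = (x != u).
Proof. by rewrite -(pm_vu M) (inj_eq (pm_vinj M)). Qed.

Lemma pm_in_edge x : rg x = u -> exists e, [/\ de x = inl e, rg e = v & A e].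
Proof.
move=> xu; have /(pm_eimage M) : exists y, de y = de x by exists x.
have := pm_rg M x; rewrite xu (pm_vu M).
case: (de x) => [e /= /esym ev|[e f] /= /esym fv [_ f_src _]]; last by case: hl; exists f.
case=> [[_]|[_ Ae]|[e_src _]]; [by rewrite ev eqxx | by exists e | by case: hl; exists e].
Qed.

Lemma pm_out_edge x : sg x = u -> exists f, [/\ de x = inl f, sg f = v & B f].
Proof.
move=> xu; have /(pm_eimage M) : exists y, de y = de x by exists x.
have := pm_sg M x; rewrite xu (pm_vu M).
case: (de x) => [f /= /esym fv|[e f] /= /esym ev [e_rg _ _]]; last by case: hl; exists e.
case=> [[]|[f_rg _]|[_ Bf]]; [by rewrite fv eqxx | by case: hl; exists f | by exists f].
Qed.

Lemma pm_noloop : ~ supports_loop u.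
Proof.
case=> x [/pm_out_edge [f [xf fv _]] /pm_in_edge [e [xe ev _]]].
by case: hl; exists f; split => //; move: xe; rewrite xf => -[->].
Qed.

Lemma pm_sg_u x f : de x = inl f -> sg f = v -> sg x = u.
Proof. by move=> xf fv; apply: pm_dv_eq_v; rewrite (pm_sg M) xf. Qed.

Lemma pm_rg_u x e : de x = inl e -> rg e = v -> rg x = u.
Proof. by move=> xe ev; apply: pm_dv_eq_v; rewrite (pm_rg M) xe. Qed.

Lemma pm_out_at_most n :
  at_most (fun f => sg f = v /\ B f) n -> at_most (fun x => sg x = u) n.
Proof.
apply: at_most_inj (fun x => cedge_head (de x)) _ _.
  by move=> x /pm_out_edge [f [-> ? ?]].
move=> x y /pm_out_edge [f [xf _ _]] /pm_out_edge [f' [yf' _ _]].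
by rewrite xf yf' /= => ff'; apply: (pm_einj M); rewrite xf yf' ff'.
Qed.

Lemma pm_in_sources_at_most n :
  at_most (sources (fun e => rg e = v /\ A e)) n ->
  at_most (sources (fun x => rg x = u)) n.
Proof.
apply: at_most_inj dv _ _ => [_ [x /pm_in_edge [e [xe ev Ae]] <-]|x y _ _ /(pm_vinj M) //].
by exists e => //; rewrite (pm_sg M) xe.
Qed.

Definition precollapse_code (y : collapse_E u) : cedge G :=
  match y with
  | inl x => de (sval x)
  | inr p => inr (cedge_head (de (sval p).1), cedge_head (de (sval p).2))
  end.

Lemma precollapse_code_pair (p : {p : gE K * gE K | rg p.1 = u /\ sg p.2 = u}) :
  exists e f, [/\ de (sval p).1 = inl e, de (sval p).2 = inl f,
    precollapse_code (inr p) = inr (e, f), rg e = v /\ A e & sg f = v /\ B f].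
Proof.
case: p => [[a b] [ra sb]] /=.
have [e [ae ev Ae]] := pm_in_edge ra; have [f [bf fv Bf]] := pm_out_edge sb.
by exists e, f; rewrite ae bf.
Qed.

Lemma precollapse_code_inj : injective precollapse_code.
Proof.
have no_pair x p : de x <> precollapse_code (inr p).
  have [e [f [_ _ -> [_ Ae] [_ Bf]]]] := precollapse_code_pair p.
  move=> xef; have /(pm_eimage M) : exists y, de y = inr (e, f) by exists x.
  by rewrite /= Ae Bf => -[].
case=> [x|p] [x'|p'].
- by move/(pm_einj M)/sval_inj ->.
- by move/no_pair.
- by move/esym/no_pair.
- have [e [f [pe pf -> _ _]]] := precollapse_code_pair p.
  have [e' [f' [pe' pf' -> _ _]]] := precollapse_code_pair p'.
  case=> ee' ff'; congr inr; apply: sval_inj.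
  case: (sval p) (sval p') pe pf pe' pf' => a b [a' b'] /=.
  by rewrite ee' ff' => <- <- /(pm_einj M) -> /(pm_einj M) ->.
Qed.

Lemma precollapse_code_image t :
  collapsed_edge v t <-> exists y, precollapse_code y = t.
Proof.
split.
- case: t => [e /= [e_src e_rg]|[e f] /= [ev fv]].
    have /(pm_eimage M) [x xe] : precollapsed_edge v A B (inl e) by constructor 1.
    have xs : sg x != u by rewrite -pm_dv_neq_v (pm_sg M) xe.
    have xr : rg x != u by rewrite -pm_dv_neq_v (pm_rg M) xe.
    by exists (inl (exist _ x (conj xs xr))).
  (* [ef] is either an edge of [K] or the composite of two edges at [u]. *)
  case ABef: (A e && B f).
    have /andP [Ae Bf] := ABef.
    have /(pm_eimage M) [a ae] : precollapsed_edge v A B (inl e) by constructor 2.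
    have /(pm_eimage M) [b bf] : precollapsed_edge v A B (inl f) by constructor 3.
    exists (inr (exist (fun p : gE K * gE K => rg p.1 = u /\ sg p.2 = u) (a, b)
                  (conj (pm_rg_u ae ev) (pm_sg_u bf fv)))).
    by rewrite /= ae bf.
  have /(pm_eimage M) [x xef] : precollapsed_edge v A B (inr (e, f)) by rewrite /= ABef.
  have xs : sg x != u.
    by rewrite -pm_dv_neq_v (pm_sg M) xef; apply/eqP => e_src; case: hl; exists e.
  have xr : rg x != u.
    by rewrite -pm_dv_neq_v (pm_rg M) xef; apply/eqP => f_rg; case: hl; exists f.
  by exists (inl (exist _ x (conj xs xr))).
- case=> [[[x [xs xr]] <-|p <-]]; last first.
    by have [e [f [_ _ -> [ev _] [fv _]]]] := precollapse_code_pair p.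
  rewrite /=; have /(pm_eimage M) : exists y, de y = de x by exists x.
  case xt: (de x) => [e|[e f]] /=; last by case.
  case=> [//|[ev _]|[ev _]].
  + by case/eqP: xr; apply: pm_rg_u xt ev.
  + by case/eqP: xs; apply: pm_sg_u xt ev.
Qed.

Lemma precollapse_collapse_model :
  collapse_model v (collapse_graph pm_noloop) (fun x => dv (sval x)) precollapse_code.
Proof.
split.
- by move=> x y /(pm_vinj M) /val_inj.
- move=> w; split => [w_neq|[x <-]].
    have [x xw] := pm_vsurj M w.
    have x_neq : x != u by rewrite -pm_dv_neq_v xw.
    by exists (exist _ x x_neq).
  by rewrite pm_dv_neq_v; apply: (svalP x).
- exact: precollapse_code_inj.
- exact: precollapse_code_image.
- case=> [x|p]; first exact: (pm_rg M (sval x)).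
  have [e [f [_ pf -> _ _]]] := precollapse_code_pair p.
  by rewrite /= (pm_rg M) pf.
- case=> [x|p]; first exact: (pm_sg M (sval x)).
  have [e [f [pe _ -> _ _]]] := precollapse_code_pair p.
  by rewrite /= (pm_sg M) pe.
Qed.

Lemma precollapse_iso H :
  graph_iso H (collapse_graph hl) -> graph_iso H (collapse_graph pm_noloop).
Proof.
move=> HI; apply: graph_iso_trans HI (graph_iso_sym _).
exact: (collapse_model_iso hl precollapse_collapse_model).
Qed.

End PrecollapseModel.

Lemma delete_source_model (G : graph) (v : gV G) :
  is_source v -> collapse_model v (del_graph v) sval (fun x => inl (sval x)).
Proof.
move=> src; split.
- exact: val_inj.
- move=> w; split => [w_neq|[[x x_neq] <-] //].
  by exists (exist _ w w_neq).
- by move=> x y [] /sval_inj.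
- case=> [e|[e f]] /=; split.
  + by move=> he; exists (exist _ e he).
  + by case=> [[e' he'] [<-]].
  + by case=> /src.
  + by case.
- by case=> [e he].
- by case=> [e he].
Qed.

Definition reduce_code (G : graph) (u : gV G) (f : gE G) (x : reduce_E u) : cedge G :=
  match x with inl e => inl (sval e) | inr e => inr (sval e, f) end.

Lemma reduce_model (G : graph) (u : gV G) (f : gE G)
    (f_only : forall e : gE G, sg e = u -> e = f) (f_rg : rg f != u) :
  sg f = u -> collapse_model u (reduce_graph f_only f_rg) sval (reduce_code f).
Proof.
move=> fu; split.
- exact: val_inj.
- move=> w; split => [w_neq|[[x x_neq] <-] //].
  by exists (exist _ w w_neq).
- by case=> [e|e] [e'|e'] //= [] /sval_inj ->.
- case=> [e|[e f']] /=; split.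
  + by move=> he; exists (inl (exist _ e he)).
  + by case=> [[[e' he']|//] [<-]].
  + by case=> eu /f_only ->; exists (inr (exist _ e eu)).
  + by case=> [[//|[e' he']] [<- <-]].
- by case=> [[e he]|[e he]].
- by case=> [[e he]|[e he]].
Qed.

Lemma move_eq_collapse_source (G : graph) (v : gV G) (hl : ~ supports_loop v) H :
  is_regular v -> is_source v -> graph_iso H (collapse_graph hl) -> move_eq G H.
Proof.
move=> reg src HI; apply/meq_step/(move_S reg src).
exact: graph_iso_trans HI (graph_iso_sym (collapse_model_iso hl (delete_source_model src))).
Qed.

Lemma move_eq_collapse_reduce (G : graph) (v : gV G) (hl : ~ supports_loop v) f H :
  sg f = v -> (forall e, sg e = v -> e = f) -> is_regular v ->
  (exists w, forall e, rg e = v -> sg e = w) ->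
  graph_iso H (collapse_graph hl) -> move_eq G H.
Proof.
move=> fv f_only reg one_src HI.
apply/meq_step/(move_R fv (hf := f_only) (hrf := noloop_r hl fv) reg one_src).
exact: graph_iso_trans HI (graph_iso_sym (collapse_model_iso hl (reduce_model _ _ fv))).
Qed.

Definition merge_vertex (G : graph) (v : gV G) (n : nat) (x : split_V v n) : gV G :=
  match x with inl w => sval w | inr _ => v end.

Lemma merge_vertex_inj (G : graph) (v : gV G) n (x y : split_V v n) :
  merge_vertex x != v -> merge_vertex x = merge_vertex y -> x = y.
Proof.
case: x y => [[w wv]|i] [[w' w'v]|j] /=; try by rewrite eqxx.
- by move=> _ ww'; congr inl; apply: val_inj.
- by move=> w_neq w_eq; rewrite w_eq eqxx in w_neq.
Qed.

Lemma ord2_neq0 (i : 'I_2) : i != ord0 -> i = ord_max.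
Proof. by case: i => [[|[|m]] hm] //= _; apply: val_inj. Qed.

Lemma merge_vertex_off0_inj (G : graph) (v : gV G) (x y : split_V v 2) :
  x != inr ord0 -> y != inr ord0 -> merge_vertex x = merge_vertex y -> x = y.
Proof.
have to_max (z : split_V v 2) : z != inr ord0 -> merge_vertex z = v -> z = inr ord_max.
  case: z => [[w wv] _ /= wv'|i /= i0 _]; first by exfalso; move: wv; rewrite wv' eqxx.
  by rewrite (@ord2_neq0 i) //; apply: contra i0 => /eqP ->.
move=> x0 y0 xy; case: (eqVneq (merge_vertex x) v) => [xv|xv].
  by rewrite (to_max x x0 xv) (to_max y y0) // -xy.
exact: merge_vertex_inj xv xy.
Qed.

Lemma merge_vertex_off0_surj (G : graph) (v : gV G) w :
  exists x : {z : split_V v 2 | z != inr ord0}, merge_vertex (sval x) = w.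
Proof.
case: (eqVneq w v) => [->|wv]; first by exists (exist _ (inr ord_max) isT).
by exists (exist _ (inl (exist _ w wv)) isT).
Qed.

Definition lift_code (G K : graph) (u : gV K) (orig : gE K -> gE G)
    (y : collapse_E u) : cedge G :=
  match y with
  | inl x => inl (orig (sval x))
  | inr p => inr (orig (sval p).1, orig (sval p).2)
  end.

Lemma lift_code_rg (G K : graph) (u : gV K) (hl : ~ supports_loop u)
    (m : gV K -> gV G) (orig : gE K -> gE G) :
  (forall x, m (rg x) = rg (orig x)) ->
  forall y : gE (collapse_graph hl), m (sval (rg y)) = cedge_rg (lift_code orig y).
Proof. by move=> m_rg [x|p]; apply: m_rg. Qed.

Lemma lift_code_sg (G K : graph) (u : gV K) (hl : ~ supports_loop u)
    (m : gV K -> gV G) (orig : gE K -> gE G) :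
  (forall x, m (sg x) = sg (orig x)) ->
  forall y : gE (collapse_graph hl), m (sval (sg y)) = cedge_sg (lift_code orig y).
Proof. by move=> m_sg [x|p]; apply: m_sg. Qed.

Section OutSplit.
Variables (G : graph) (v : gV G) (hl : ~ supports_loop v).

Definition out_orig n (x : out_E v n) : gE G :=
  match x with inl e => sval e | inr (e, _) => sval e end.

Lemma merge_out_r n (x : out_E v n) : merge_vertex (out_r x) = rg (out_orig x).
Proof. by case: x => [[e he]|[[e he] i]]. Qed.

Lemma out_s_orig n (part : gE G -> 'I_n) (x : out_E v n) :
  out_s part x = out_src v part (out_orig x).
Proof. by case: x => [e|[e i]]. Qed.

Lemma out_src_v n (part : gE G -> 'I_n) e : sg e = v -> out_src v part e = inr (part e).
Proof. by move=> ev; rewrite /out_src insubF // ev eqxx. Qed.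

Lemma out_src_inr n (part : gE G -> 'I_n) e i :
  out_src v part e = inr i -> sg e = v /\ part e = i.
Proof. by rewrite /out_src; case: insubP => [x _ _|/negbNE /eqP ev] //= [<-]. Qed.

Lemma merge_out_s n (part : gE G -> 'I_n) (x : out_E v n) :
  merge_vertex (out_s part x) = sg (out_orig x).
Proof.
rewrite out_s_orig /out_src.
by case: insubP => [w _ <-|/negbNE /eqP ->].
Qed.

Lemma out_orig_inj n (x y : out_E v n) :
  out_orig x = out_orig y -> out_r x = out_r y -> x = y.
Proof.
case: x y => [[e he]|[[e he] i]] [[e' he']|[[e' he'] i']] //= ee' [].
- by move=> _; congr inl; apply: val_inj.
- by move=> ii'; congr inr; congr pair; [apply: sval_inj | ].
Qed.

Lemma out_r_s_neq n (part : gE G -> 'I_n) (x : out_E v n) i j :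
  out_s part x = inr i -> out_r x <> inr j.
Proof.
move=> xs xr; case: hl; exists (out_orig x).
by rewrite -(merge_out_s part) -merge_out_r xs xr.
Qed.

Lemma outsplit_noloop n (part : gE G -> 'I_n) i :
  ~ supports_loop (G := outsplit_graph v part) (inr i).
Proof. by case=> x [xs xr]; apply: out_r_s_neq xs xr. Qed.

Variable part : gE G -> 'I_2.

Local Notation K0 := (outsplit_graph v part).

Definition out_collapse0 : graph :=
  collapse_graph (outsplit_noloop (part := part) (i := ord0)).

Definition out_v1 : gV out_collapse0 := exist _ (inr ord_max) isT.

Definition out_code : gE out_collapse0 -> cedge G :=
  lift_code (K := K0) (u := inr ord0) (@out_orig 2).

Lemma out_orig_inj0 (x y : out_E v 2) :
  out_orig x = out_orig y -> (out_r x == inr ord0) = (out_r y == inr ord0) -> x = y.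
Proof.
move=> xy r0; apply: (out_orig_inj xy); move: r0.
case: (eqVneq (out_r x) (inr ord0)) => [-> /esym/eqP //|x0].
case: (eqVneq (out_r y) (inr ord0)) => [//|y0 _].
by apply: merge_vertex_off0_inj x0 y0 _; rewrite !merge_out_r xy.
Qed.

Lemma out_src_off0 e : (sg e = v -> part e != ord0) -> out_src v part e != inr ord0.
Proof. by move=> e_part; apply/eqP => /out_src_inr [/e_part /eqP pe /pe]. Qed.

Lemma out_r_off0 (x : gE K0) : sg x = inr ord0 -> (out_r x == inr ord0) = false.
Proof. by move=> xs; apply/eqP/(out_r_s_neq xs). Qed.

Lemma out_code_inj : injective out_code.
Proof.
case=> [[x [xs xr]]|[[a b] [ar bs]]] [[y [ys yr]]|[[a' b'] [ar' bs']]] //= [].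
- move=> /out_orig_inj0 xy; congr inl; apply: sval_inj => /=.
  by apply: xy; rewrite (negbTE xr) (negbTE yr).
- move=> /out_orig_inj0 aa' /out_orig_inj0 bb'; congr inr; apply: sval_inj => /=.
  have -> : a = a' by apply: aa'; rewrite (ar : out_r a = _) (ar' : out_r a' = _).
  by have -> : b = b' by apply: bb'; rewrite (out_r_off0 bs) (out_r_off0 bs').
Qed.

Lemma out_code_image t :
  precollapsed_edge v predT (fun f => part f != ord0) t <-> exists y, out_code y = t.
Proof.
split.
- case: t => [e|[e f]] /=.
    have untouched_out (x : gE K0) :
        out_s part x != inr ord0 -> out_r x != inr ord0 ->
        exists y, out_code y = inl (out_orig x).
      by move=> xs xr; exists (inl (exist _ x (conj xs xr))).
    case=> [[e_src e_rg]|[ev _]|[ev e_part]].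
    + apply: (untouched_out (inl (exist _ e e_rg))) => //.
      by apply: out_src_off0 => /eqP; rewrite (negbTE e_src).
    + apply: (untouched_out (inr (exist _ e ev, ord_max))) => //.
      by apply: out_src_off0 => e_src; case: hl; exists e.
    + by apply: (untouched_out (inl (exist _ e (noloop_r hl ev)))); rewrite //= out_src_off0.
  case=> ev fv /negPn f_part.
  have ar : out_r (inr (exist _ e ev, ord0) : out_E v 2) = inr ord0 by [].
  have bs : out_s part (inl (exist _ f (noloop_r hl fv)) : out_E v 2) = inr ord0.
    by rewrite /= out_src_v // (eqP f_part).
  by exists (inr (exist (fun p : gE K0 * gE K0 => rg p.1 = inr ord0 /\ sg p.2 = inr ord0)
                  (_, _) (conj ar bs))).
- case=> [[[x [xs xr]] <-|[[a b] [ar bs]] <-]] /=.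
    case: (eqVneq (rg (out_orig x)) v) => [x_rg|x_rg]; first by constructor 2.
    case: (eqVneq (sg (out_orig x)) v) => [x_src|x_src]; last by constructor 1.
    constructor 3; split => //.
    by move: (xs : out_s part x != _); rewrite out_s_orig out_src_v //; apply: contra => /eqP ->.
  have [b_src b_part] : sg (out_orig b) = v /\ part (out_orig b) = ord0.
    by apply: out_src_inr; rewrite -out_s_orig.
  by rewrite -merge_out_r (ar : out_r a = _) b_part.
Qed.

Lemma outsplit_precollapse_model :
  precollapse_model v predT (fun f => part f != ord0) out_v1
    (fun x => merge_vertex (sval x)) out_code.
Proof.
split.
- by move=> x y /(merge_vertex_off0_inj (svalP x) (svalP y)) /val_inj.
- exact: merge_vertex_off0_surj.
- by [].
- exact: out_code_inj.
- exact: out_code_image.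
- exact: (lift_code_rg (K := K0) (@merge_out_r 2)).
- exact: (lift_code_sg (K := K0) (merge_out_s part)).
Qed.

Lemma outsplit_v0_out_at_most n :
  at_most (fun e => sg e = v /\ part e = ord0) n ->
  at_most (fun x : gE K0 => sg x = inr ord0) n.
Proof.
apply: at_most_inj (@out_orig 2) _ _.
  by move=> x xs; apply: out_src_inr; rewrite -out_s_orig.
by move=> x y xs ys /out_orig_inj0; apply; rewrite !out_r_off0.
Qed.

Lemma outsplit_v0_in_sources_at_most n :
  at_most (sources (fun e => rg e = v)) n ->
  at_most (sources (fun x : gE K0 => rg x = inr ord0)) n.
Proof.
have edge_in (x : gE K0) : rg x = inr ord0 -> rg (out_orig x) = v.
  by move=> xr; rewrite -merge_out_r (xr : out_r x = _).
apply: at_most_inj (@merge_vertex G v 2) _ _.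
  by move=> _ [x /edge_in x_rg <-]; exists (out_orig x); rewrite ?merge_out_s.
move=> _ w [x /edge_in x_rg <-] _; apply: merge_vertex_inj.
by rewrite merge_out_s; apply/eqP => x_src; case: hl; exists (out_orig x).
Qed.

End OutSplit.

Section InSplit.
Variables (G : graph) (v : gV G) (hl : ~ supports_loop v).

Definition in_orig n (x : in_E v n) : gE G :=
  match x with inl e => sval e | inr (e, _) => sval e end.

Lemma merge_in_s n (x : in_E v n) : merge_vertex (in_s x) = sg (in_orig x).
Proof. by case: x => [[e he]|[[e he] i]]. Qed.

Lemma in_r_orig n (part : gE G -> 'I_n) (x : in_E v n) :
  in_r part x = in_tgt v part (in_orig x).
Proof. by case: x => [e|[e i]]. Qed.

Lemma in_tgt_v n (part : gE G -> 'I_n) e : rg e = v -> in_tgt v part e = inr (part e).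
Proof. by move=> ev; rewrite /in_tgt insubF // ev eqxx. Qed.

Lemma in_tgt_inr n (part : gE G -> 'I_n) e i :
  in_tgt v part e = inr i -> rg e = v /\ part e = i.
Proof. by rewrite /in_tgt; case: insubP => [x _ _|/negbNE /eqP ev] //= [<-]. Qed.

Lemma merge_in_r n (part : gE G -> 'I_n) (x : in_E v n) :
  merge_vertex (in_r part x) = rg (in_orig x).
Proof.
rewrite in_r_orig /in_tgt.
by case: insubP => [w _ <-|/negbNE /eqP ->].
Qed.

Lemma in_orig_inj n (x y : in_E v n) :
  in_orig x = in_orig y -> in_s x = in_s y -> x = y.
Proof.
case: x y => [[e he]|[[e he] i]] [[e' he']|[[e' he'] i']] //= ee' [].
- by move=> _; congr inl; apply: val_inj.
- by move=> ii'; congr inr; congr pair; [apply: sval_inj | ].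
Qed.

Lemma in_s_r_neq n (part : gE G -> 'I_n) (x : in_E v n) i j :
  in_r part x = inr i -> in_s x <> inr j.
Proof.
move=> xr xs; case: hl; exists (in_orig x).
by rewrite -(merge_in_r part) -merge_in_s xs xr.
Qed.

Lemma insplit_noloop n (part : gE G -> 'I_n) i :
  ~ supports_loop (G := insplit_graph v part) (inr i).
Proof. by case=> x [xs xr]; apply: in_s_r_neq xr xs. Qed.

Variable part : gE G -> 'I_2.

Local Notation K0 := (insplit_graph v part).

Definition in_collapse0 : graph := collapse_graph (insplit_noloop (part := part) (i := ord0)).

Definition in_v1 : gV in_collapse0 := exist _ (inr ord_max) isT.

Definition in_code : gE in_collapse0 -> cedge G :=
  lift_code (K := K0) (u := inr ord0) (@in_orig 2).

Lemma in_orig_inj0 (x y : in_E v 2) :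
  in_orig x = in_orig y -> (in_s x == inr ord0) = (in_s y == inr ord0) -> x = y.
Proof.
move=> xy s0; apply: (in_orig_inj xy); move: s0.
case: (eqVneq (in_s x) (inr ord0)) => [-> /esym/eqP //|x0].
case: (eqVneq (in_s y) (inr ord0)) => [//|y0 _].
by apply: merge_vertex_off0_inj x0 y0 _; rewrite !merge_in_s xy.
Qed.

Lemma in_tgt_off0 e : (rg e = v -> part e != ord0) -> in_tgt v part e != inr ord0.
Proof. by move=> e_part; apply/eqP => /in_tgt_inr [/e_part /eqP pe /pe]. Qed.

Lemma in_code_inj : injective in_code.
Proof.
have s_off0 (x : gE K0) : rg x = inr ord0 -> (in_s x == inr ord0) = false.
  by move=> xr; apply/eqP/(in_s_r_neq xr).
case=> [[x [xs xr]]|[[a b] [ar bs]]] [[y [ys yr]]|[[a' b'] [ar' bs']]] //= [].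
- move=> /in_orig_inj0 xy; congr inl; apply: sval_inj => /=.
  by apply: xy; rewrite (negbTE xs) (negbTE ys).
- move=> /in_orig_inj0 aa' /in_orig_inj0 bb'; congr inr; apply: sval_inj => /=.
  have -> : a = a' by apply: aa'; rewrite (s_off0 _ ar) (s_off0 _ ar').
  by have -> : b = b' by apply: bb'; rewrite (bs : in_s b = _) (bs' : in_s b' = _).
Qed.

Lemma in_code_image t :
  precollapsed_edge v (fun e => part e != ord0) predT t <-> exists y, in_code y = t.
Proof.
split.
- case: t => [e|[e f]] /=.
    have untouched_in (x : gE K0) :
        in_s x != inr ord0 -> in_r part x != inr ord0 -> exists y, in_code y = inl (in_orig x).
      by move=> xs xr; exists (inl (exist _ x (conj xs xr))).
    case=> [[e_src e_rg]|[ev e_part]|[ev _]].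
    + apply: (untouched_in (inl (exist _ e e_src))) => //.
      by apply: in_tgt_off0 => /eqP; rewrite (negbTE e_rg).
    + by apply: (untouched_in (inl (exist _ e (noloop_s hl ev)))); rewrite //= in_tgt_off0.
    + apply: (untouched_in (inr (exist _ e ev, ord_max))) => //.
      by apply: in_tgt_off0 => e_rg; case: hl; exists e.
  case=> ev fv; rewrite andbT => /negPn e_part.
  have ar : in_r part (inl (exist _ e (noloop_s hl ev)) : in_E v 2) = inr ord0.
    by rewrite /= in_tgt_v // (eqP e_part).
  have bs : in_s (inr (exist _ f fv, ord0) : in_E v 2) = inr ord0 by [].
  by exists (inr (exist (fun p : gE K0 * gE K0 => rg p.1 = inr ord0 /\ sg p.2 = inr ord0)
                  (_, _) (conj ar bs))).
- case=> [[[x [xs xr]] <-|[[a b] [ar bs]] <-]] /=.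
    case: (eqVneq (sg (in_orig x)) v) => [x_src|x_src]; first by constructor 3.
    case: (eqVneq (rg (in_orig x)) v) => [x_rg|x_rg]; last by constructor 1.
    constructor 2; split => //.
    by move: (xr : in_r part x != _); rewrite in_r_orig in_tgt_v //; apply: contra => /eqP ->.
  have [a_rg a_part] : rg (in_orig a) = v /\ part (in_orig a) = ord0.
    by apply: in_tgt_inr; rewrite -in_r_orig.
  by rewrite -merge_in_s (bs : in_s b = _) a_part.
Qed.

Lemma insplit_precollapse_model :
  precollapse_model v (fun e => part e != ord0) predT in_v1
    (fun x => merge_vertex (sval x)) in_code.
Proof.
split.
- by move=> x y /(merge_vertex_off0_inj (svalP x) (svalP y)) /val_inj.
- exact: merge_vertex_off0_surj.
- by [].
- exact: in_code_inj.
- exact: in_code_image.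
- exact: (lift_code_rg (K := K0) (merge_in_r part)).
- exact: (lift_code_sg (K := K0) (@merge_in_s 2)).
Qed.

Lemma insplit_v0_out_at_most n :
  at_most (fun e => sg e = v) n -> at_most (fun x : gE K0 => sg x = inr ord0) n.
Proof.
apply: at_most_inj (@in_orig 2) _ _.
  by move=> x xs; rewrite -merge_in_s (xs : in_s x = _).
by move=> x y xs ys /in_orig_inj0; apply; rewrite (xs : in_s x = _) (ys : in_s y = _).
Qed.

Lemma insplit_v0_in_sources_at_most n :
  at_most (sources (fun e => rg e = v /\ part e = ord0)) n ->
  at_most (sources (fun x : gE K0 => rg x = inr ord0)) n.
Proof.
have edge_in (x : gE K0) : rg x = inr ord0 -> rg (in_orig x) = v /\ part (in_orig x) = ord0.
  by move=> xr; apply: in_tgt_inr; rewrite -in_r_orig.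
apply: at_most_inj (@merge_vertex G v 2) _ _.
  by move=> _ [x /edge_in x_in <-]; exists (in_orig x); rewrite ?merge_in_s.
move=> _ w [x /edge_in [x_rg _] <-] _; apply: merge_vertex_inj.
by rewrite merge_in_s; apply/eqP => x_src; case: hl; exists (in_orig x).
Qed.

End InSplit.

Definition single_part (G : graph) (f1 e : gE G) : 'I_2 :=
  if excluded_middle_informative (e = f1) then ord0 else ord_max.

Lemma single_part0 (G : graph) (f1 e : gE G) : single_part f1 e = ord0 <-> e = f1.
Proof. by rewrite /single_part; case: excluded_middle_informative. Qed.

Lemma outsplit_single_move (G : graph) (v : gV G) (f1 f2 : gE G) :
  sg f1 = v -> sg f2 = v -> f1 <> f2 -> move_step G (outsplit_graph v (single_part f1)).
Proof.
move=> f1v f2v f12; apply: (move_O (v := v)) (graph_iso_refl _).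
- by move=> sink; apply: (sink f1).
- move=> i; case: (eqVneq i ord0) => [->|/ord2_neq0 ->].
    by exists f1; split => //; apply/single_part0.
  exists f2; split => //; apply: ord2_neq0; apply/eqP => /single_part0 f21.
  by apply: f12; rewrite f21.
have part0_finite : finite_set (fun e => sg e = v /\ single_part f1 e = ord0).
  apply: (at_most_finite (x0 := f1)) (at_most_sub (at_most1 f1) _).
    by split => //; apply/single_part0.
  by move=> e [_ /single_part0].
move=> i j ij; case: (eqVneq i ord0) => [-> | i0]; first by left.
case: (eqVneq j ord0) => [-> | j0]; first by right.
by move: ij; rewrite (ord2_neq0 i0) (ord2_neq0 j0) eqxx.
Qed.

Definition source_part (G : graph) (w : gV G) (e : gE G) : 'I_2 :=
  if sg e == w then ord0 else ord_max.

Lemma source_part0 (G : graph) (w : gV G) e : (source_part w e == ord0) = (sg e == w).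
Proof. by rewrite /source_part; case: (sg e == w). Qed.

Lemma insplit_source_move (G : graph) (v : gV G) (e1 e2 : gE G) :
  is_regular v -> rg e1 = v -> rg e2 = v -> sg e1 <> sg e2 ->
  move_step G (insplit_graph v (source_part (sg e1))).
Proof.
move=> reg e1v e2v e12; apply: (move_I reg _ _ (graph_iso_refl _)).
  by move=> src; apply: (src e1).
move=> i; case: (eqVneq i ord0) => [->|/ord2_neq0 ->].
  by exists e1; split => //; apply/eqP; rewrite source_part0.
exists e2; split => //; apply: ord2_neq0; rewrite source_part0.
by apply/eqP => e21; apply: e12.
Qed.

Definition collapse_move_eq_bounded (a b : nat) : Prop :=
  forall (G : graph) (v : gV G) (hl : ~ supports_loop v),
    (exists e, sg e = v) -> at_most (fun e => sg e = v) a ->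
    at_most (sources (fun e => rg e = v)) b ->
    forall H, graph_iso H (collapse_graph hl) -> move_eq G H.

Lemma move_eq_collapse_outsplit a b :
  (forall a', a' < a -> collapse_move_eq_bounded a' b) ->
  forall (G : graph) (v : gV G) (hl : ~ supports_loop v) f1 f2,
    sg f1 = v -> sg f2 = v -> f1 <> f2 ->
    at_most (fun e => sg e = v) a -> at_most (sources (fun e => rg e = v)) b ->
    forall H, graph_iso H (collapse_graph hl) -> move_eq G H.
Proof.
move=> IH G v hl f1 f2 f1v f2v f12 Ha Hb H HI.
have a_gt1 : 1 < a := at_most_gt1 f1v f2v f12 Ha.
have M := outsplit_precollapse_model hl (single_part f1).
apply: meq_trans (meq_step (outsplit_single_move f1v f2v f12)) _.
apply: (meq_trans (H := out_collapse0 hl (single_part f1))).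
  apply: IH a_gt1 _ _ _ _ _ _ _ (graph_iso_refl _).
  - exists (inl (exist _ f1 (noloop_r hl f1v))).
    by rewrite /= out_src_v //; congr inr; apply/single_part0.
  - apply: (outsplit_v0_out_at_most hl).
    by apply: (at_most_sub (at_most1 f1)) => e [_ /single_part0].
  - exact: (outsplit_v0_in_sources_at_most hl).
apply: (IH a.-1 _ _ _ (pm_noloop hl M)).
- by lia.
- have /(pm_eimage M) [x xf2] :
      precollapsed_edge v predT (fun f => single_part f1 f != ord0) (inl f2).
    constructor 3; split => //; apply/eqP => /single_part0 f21.
    by apply: f12; rewrite f21.
  by exists x; exact: (pm_sg_u M xf2 f2v).
- apply: (pm_out_at_most hl M); apply: (at_most_sub (at_most_remove f1v Ha)).
  move=> e [ev e_part]; split => // ef1.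
  by move/eqP: e_part; apply; apply/single_part0.
- apply: (pm_in_sources_at_most hl M); apply: (at_most_sub Hb).
  by move=> _ [e [ev _] <-]; exists e.
- exact: (precollapse_iso M HI).
Qed.

Lemma move_eq_collapse_insplit a b :
  (forall b', b' < b -> collapse_move_eq_bounded a b') ->
  forall (G : graph) (v : gV G) (hl : ~ supports_loop v) e0 e1 e2,
    sg e0 = v -> rg e1 = v -> rg e2 = v -> sg e1 <> sg e2 ->
    at_most (fun e => sg e = v) a -> at_most (sources (fun e => rg e = v)) b ->
    forall H, graph_iso H (collapse_graph hl) -> move_eq G H.
Proof.
move=> IH G v hl e0 e1 e2 e0v e1v e2v e12 Ha Hb H HI.
have b_gt1 : 1 < b by apply: at_most_gt1 e12 Hb; [exists e1 | exists e2].
have M := insplit_precollapse_model hl (source_part (sg e1)).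
apply: meq_trans (meq_step (insplit_source_move (at_most_regular e0v Ha) e1v e2v e12)) _.
apply: (meq_trans (H := in_collapse0 hl (source_part (sg e1)))).
  apply: IH b_gt1 _ _ _ _ _ _ _ (graph_iso_refl _).
  - by exists (inr (exist _ e0 e0v, ord0)).
  - exact: (insplit_v0_out_at_most (source_part (sg e1))).
  - apply: (insplit_v0_in_sources_at_most hl); apply: (at_most_sub (at_most1 (sg e1))).
    by move=> w [e [_ e_part] <-]; apply/eqP; rewrite -source_part0 e_part.
apply: (IH b.-1 _ _ _ (pm_noloop hl M)).
- by lia.
- have /(pm_eimage M) [x xe0] :
      precollapsed_edge v (fun e => source_part (sg e1) e != ord0) predT (inl e0).
    by constructor 3.
  by exists x; exact: (pm_sg_u M xe0 e0v).
- by apply: (pm_out_at_most hl M); apply: (at_most_sub Ha) => e [].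
- apply: (pm_in_sources_at_most hl M).
  have e1_src : sources (fun e => rg e = v) (sg e1) by exists e1.
  apply: (at_most_sub (at_most_remove e1_src Hb)) => _ [e [ev e_part] <-].
  split; first by exists e.
  by apply/eqP; rewrite -source_part0.
- exact: (precollapse_iso M HI).
Qed.

Lemma collapse_move_eq_bounded_all a : forall b, collapse_move_eq_bounded a b.
Proof.
elim/ltn_ind: a => a IHa b; elim/ltn_ind: b => b IHb G v hl [e0 e0v] Ha Hb H HI.
have reg := at_most_regular e0v Ha.
have [[e1 e1v]|no_in] := classic (exists e, rg e = v); last first.
  by apply: move_eq_collapse_source reg _ HI => e ev; apply: no_in; exists e.
have [[f1 [f2 [f1v f2v f12]]]|one_out] :=
  classic (exists f1 f2, [/\ sg f1 = v, sg f2 = v & f1 <> f2]).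
  exact: move_eq_collapse_outsplit (fun a' a'_lt => IHa a' a'_lt b)
    _ _ _ _ _ f1v f2v f12 Ha Hb _ HI.
have [[e2 [e3 [e2v e3v e23]]]|one_src] :=
  classic (exists e2 e3, [/\ rg e2 = v, rg e3 = v & sg e2 <> sg e3]).
  exact: move_eq_collapse_insplit IHb _ _ _ _ _ _ e0v e2v e3v e23 Ha Hb _ HI.
apply: (move_eq_collapse_reduce e0v _ reg _ HI).
  by move=> e ev; apply: NNPP => ne; apply: one_out; exists e, e0.
by exists (sg e1) => e ev; apply: NNPP => ne; apply: one_src; exists e, e1.
Qed.

Theorem theorem5p2 (G : graph) (v : gV G)
  (hreg : is_regular v) (hl : ~ supports_loop v) :
  move_eq G (collapse_graph hl).
Proof.
have [e0 e0v] : exists e, sg e = v.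
  by apply: NNPP => no_out; apply: hreg; left => e ev; apply: no_out; exists e.
have [a Ha] : exists a, at_most (fun e => sg e = v) a.
  by apply: finite_at_most; apply: NNPP => infinite; apply: hreg; right.
exact: collapse_move_eq_bounded_all (ex_intro _ e0 e0v) Ha (at_most_card _) _ (graph_iso_refl _).
Qed.
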